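(* Let $(a_j)_{j\in\mathbb{N}_0}$ be a complex sequence with $\sum_{j=0}^\infty|a_j|<\infty$ and let $(b_j)_{j\in\mathbb{N}_0}$ be a strictly increasing sequence of positive reals with $b_j\to\infty$. Set $b_{-1}=0$ and $$\Delta b_j=\min(b_j-b_{j-1},\,b_{j+1}-b_j),\qquad j\ge0.$$ Suppose $a_j\Delta b_j\not\to0$ as $j\to\infty$. Let $f(t)=\sum_{j=0}^\infty a_je^{i b_jt}$. Then $f$ is bounded and continuous on $\mathbb{R}$ but differentiable at no point of $\mathbb{R}$. If in addition $\sup_j|a_j|\Delta b_j=\infty$, then $f$ is not Lipschitz continuous at any $t_0\in\mathbb{R}$. The same conclusions hold for $\operatorname{Re}f$ and $\operatorname{Im}f$.
   Context: A function $g\colon\mathbb{R}\to\mathbb{C}$ is Lipschitz continuous at $t_0$ if there exist constants $L>0$, $\eta>0$ such that $|g(t)-g(t_0)|\le L|t-t_0|$ for all $t\in\,]t_0-\eta,t_0+\eta[$. *)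

From Stdlib Require Import Reals Lra.
Open Scope R_scope.

Definition Cx : Type := (R * R)%type.
Definition Cre (z : Cx) : R := fst z.
Definition Cim (z : Cx) : R := snd z.
Definition Cadd (z w : Cx) : Cx := (fst z + fst w, snd z + snd w).
Definition Csub (z w : Cx) : Cx := (fst z - fst w, snd z - snd w).
Definition Cmul (z w : Cx) : Cx :=
  (fst z * fst w - snd z * snd w, fst z * snd w + snd z * fst w).
Definition Cscal (r : R) (z : Cx) : Cx := (r * fst z, r * snd z).
Definition Cmod (z : Cx) : R := sqrt (fst z ^ 2 + snd z ^ 2).
Definition Cexpi (theta : R) : Cx := (cos theta, sin theta).

Fixpoint Csum (u : nat -> Cx) (n : nat) : Cx :=
  match n with
  | O => u O
  | S m => Cadd (Csum u m) (u (S m))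
  end.

Definition Ccv (u : nat -> Cx) (l : Cx) : Prop :=
  forall eps, 0 < eps -> exists N, forall n, (n >= N)%nat -> Cmod (Csub (u n) l) < eps.

Definition Cabs_summable (a : nat -> Cx) : Prop :=
  exists l, Un_cv (fun n => sum_f_R0 (fun j => Cmod (a j)) n) l.

(* b_{-1} = 0 convention *)
Definition bprev (b : nat -> R) (j : nat) : R :=
  match j with O => 0 | S k => b k end.
Definition Delta_b (b : nat -> R) (j : nat) : R :=
  Rmin (b j - bprev b j) (b (S j) - b j).

Definition Cbounded (g : R -> Cx) : Prop := exists M, forall t, Cmod (g t) <= M.
Definition Rbounded (g : R -> R) : Prop := exists M, forall t, Rabs (g t) <= M.

Definition Ccontinuous_at (g : R -> Cx) (t0 : R) : Prop :=
  forall eps, 0 < eps -> exists delta, 0 < delta /\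
    forall t, Rabs (t - t0) < delta -> Cmod (Csub (g t) (g t0)) < eps.

Definition Cdifferentiable_at (g : R -> Cx) (t0 : R) : Prop :=
  exists l : Cx, forall eps, 0 < eps -> exists delta, 0 < delta /\
    forall h, h <> 0 -> Rabs h < delta ->
      Cmod (Csub (Cscal (/ h) (Csub (g (t0 + h)) (g t0))) l) < eps.

Definition Clipschitz_at (g : R -> Cx) (t0 : R) : Prop :=
  exists L eta, 0 < L /\ 0 < eta /\
    forall t, t0 - eta < t < t0 + eta -> Cmod (Csub (g t) (g t0)) <= L * Rabs (t - t0).
Definition Rlipschitz_at (g : R -> R) (t0 : R) : Prop :=
  exists L eta, 0 < L /\ 0 < eta /\
    forall t, t0 - eta < t < t0 + eta -> Rabs (g t - g t0) <= L * Rabs (t - t0).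

(* The kernel [sinc4 x = (sin x / x)^4] has a Fourier transform supported in [[-4, 4]] (a
   cubic spline). No integral has to be evaluated to see this: [sinc4 (d h) cos (l h)] is a
   combination of rescaled copies [rho b] of the quartic Taylor remainder of [cos], the
   integral of [rho b] over the line is [|b|^3] times one positive constant [kappa], and the
   combination of the five cubes [|l + 2 i d|^3] vanishes for [|l| >= 4 d].

   Let [F t = sum_k (p_k cos (b_k t) + q_k sin (b_k t))] with [sum_k (|p_k| + |q_k|) < oo].
   Integrating [F (t0 + h)] against [sinc4 (d h) cos (b_j h - ph)] with [4 d = Delta b_j]
   kills every frequency but [b_j] and returns [2 kappa / d] times
   [p_j cos (b_j t0 + ph) + q_j sin (b_j t0 + ph)]. If [F] is differentiable at [t0], then
   [F (t0 + h) - F t0] minus a suitable multiple of [sin (b_0 h)] (a frequency the weight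
   ignores for [j >= 1]) is at most [A |h| + B h^2] with [A] arbitrarily small; if [F] is only
   Lipschitz at [t0], the same holds without the sine and with some [A]. Integrating this
   bound against the weight, for the phases [0] and [PI/2], gives
   [Delta b_j * sqrt (p_j^2 + q_j^2) <= C (A + B / Delta b_j)], so this quantity tends to 0
   (where [Delta b_j] stays bounded, because [p_j, q_j -> 0]), resp. stays bounded where
   [Delta b_j >= 1]. The real and imaginary parts of [sum_j a_j e^(i b_j t)] are such
   series with amplitude [|a_j|]. *)

From Pilot Require Import Defs.
From Stdlib Require Import Reals Lra Lia.
From Coquelicot Require Import Coquelicot.
(* Coquelicot also defines [Cmod]; the names of [Defs] must take precedence. *)
Import Defs.
Open Scope R_scope.

Lemma continuous_Rplus_fun (f g : R -> R) x :
  continuous f x -> continuous g x -> continuous (fun y => f y + g y) x.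
Proof. intros; apply (continuous_plus (V:=R_NormedModule) f g); auto. Qed.

Lemma continuous_Rminus_fun (f g : R -> R) x :
  continuous f x -> continuous g x -> continuous (fun y => f y - g y) x.
Proof. intros; apply (continuous_minus (V:=R_NormedModule) f g); auto. Qed.

Lemma continuous_Rmult_fun (f g : R -> R) x :
  continuous f x -> continuous g x -> continuous (fun y => f y * g y) x.
Proof. intros; apply (continuous_mult (K:=R_AbsRing) f g); auto. Qed.

Create HintDb continuous_R.

Ltac solve_continuous :=
  repeat match goal with
  | |- continuous (fun _ => ?c) _ => apply continuous_const
  | |- continuous (fun x => x) _ => apply continuous_id
  | |- continuous (fun x => @?u x - @?v x) _ => apply (continuous_Rminus_fun u v)
  | |- continuous (fun x => @?u x + @?v x) _ => apply (continuous_Rplus_fun u v)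
  | |- continuous (fun x => @?u x * @?v x) _ => apply (continuous_Rmult_fun u v)
  | |- continuous (fun x => cos (@?u x)) _ => apply (continuous_cos_comp u)
  | |- continuous (fun x => sin (@?u x)) _ => apply (continuous_sin_comp u)
  | |- continuous (fun x => ?g (@?u x)) _ =>
      apply (continuous_comp u g); [|solve [eauto with continuous_R]]
  | |- continuous _ _ => solve [eauto with continuous_R]
  end.

Lemma ex_RInt_continuous_R (f : R -> R) a b : (forall x, continuous f x) -> ex_RInt f a b.
Proof. intros H; apply (ex_RInt_continuous (V:=R_CompleteNormedModule)); intros; apply H. Qed.

Lemma Rabs_sin_le x : Rabs (sin x) <= Rabs x.
Proof.
assert (Hpos : forall y, 0 <= y -> Rabs (sin y) <= y).
{ intros y Hy. destruct (Req_dec y 0) as [->|Hy0].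
  - rewrite sin_0, Rabs_R0; lra.
  - pose proof (sin_lt_x y ltac:(lra)). pose proof (SIN_bound y).
    apply Rabs_le. split; [|lra].
    destruct (Rle_dec 1 y); [lra|].
    assert (0 <= sin y) by (apply sin_ge_0; pose proof PI2_1; lra). lra. }
destruct (Rle_dec 0 x).
- rewrite (Rabs_right x) by lra. apply Hpos; lra.
- replace x with (- - x) by ring. rewrite sin_neg, !Rabs_Ropp, (Rabs_left x) by lra.
  apply Hpos; lra.
Qed.

Lemma cos_ge_1_sub_sqr x : 1 - x ^ 2 / 2 <= cos x.
Proof.
replace x with (2 * (x / 2)) at 2 by field. rewrite cos_2a_sin.
pose proof (Rabs_sin_le (x / 2)) as H.
apply Rsqr_le_abs_1 in H. unfold Rsqr in H. nra.
Qed.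

Lemma cos_taylor_bounds x : Rabs x <= 1 ->
  1 - x^2/2 + x^4/24 - x^6/720 <= cos x <= 1 - x^2/2 + x^4/24 - x^6/720 + x^8/40320.
Proof.
intros Hx. apply Rabs_le_between in Hx. pose proof PI2_1.
replace (1 - x^2/2 + x^4/24 - x^6/720 + x^8/40320) with (cos_ub x).
replace (1 - x^2/2 + x^4/24 - x^6/720) with (cos_lb x).
- apply COS; lra.
- unfold cos_lb, cos_approx. cbn [sum_f_R0]. unfold cos_term. rewrite !INR_IZR_INZ.
  change (Z.of_nat (Factorial.fact (2*0))) with 1%Z.
  change (Z.of_nat (Factorial.fact (2*1))) with 2%Z.
  change (Z.of_nat (Factorial.fact (2*2))) with 24%Z.
  change (Z.of_nat (Factorial.fact (2*3))) with 720%Z.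
  simpl. field.
- unfold cos_ub, cos_approx. cbn [sum_f_R0]. unfold cos_term. rewrite !INR_IZR_INZ.
  change (Z.of_nat (Factorial.fact (2*0))) with 1%Z.
  change (Z.of_nat (Factorial.fact (2*1))) with 2%Z.
  change (Z.of_nat (Factorial.fact (2*2))) with 24%Z.
  change (Z.of_nat (Factorial.fact (2*3))) with 720%Z.
  change (Z.of_nat (Factorial.fact (2*4))) with 40320%Z.
  simpl. field.
Qed.

Lemma sqrt_sum_sqr_le P Q : sqrt (P ^ 2 + Q ^ 2) <= Rabs P + Rabs Q.
Proof.
pose proof (Rabs_pos P). pose proof (Rabs_pos Q).
rewrite <- (sqrt_pow2 (Rabs P + Rabs Q)) by lra. apply sqrt_le_1_alt.
rewrite <- (pow2_abs P), <- (pow2_abs Q). nra.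
Qed.

Lemma pow4_pos x : x <> 0 -> 0 < x ^ 4.
Proof. intros H. replace (x ^ 4) with ((x * x) * (x * x)) by ring.
  assert (0 < x * x) by (apply Rsqr_pos_lt; exact H). nra. Qed.

Definition cos_rem (x : R) : R :=
  if Req_EM_T x 0 then / 24 else (cos x - 1 + x ^ 2 / 2) / x ^ 4.

Lemma cos_rem_neq0 x : x <> 0 -> cos_rem x = (cos x - 1 + x ^ 2 / 2) / x ^ 4.
Proof. intros H. unfold cos_rem. destruct (Req_EM_T x 0); [contradiction|reflexivity]. Qed.

Lemma cos_rem_0 : cos_rem 0 = / 24.
Proof. unfold cos_rem. destruct (Req_EM_T 0 0); [reflexivity|contradiction]. Qed.

Lemma cos_rem_ge0 x : 0 <= cos_rem x.
Proof.
destruct (Req_dec x 0) as [->|H].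
- rewrite cos_rem_0; lra.
- rewrite cos_rem_neq0 by exact H. pose proof (cos_ge_1_sub_sqr x). pose proof (pow4_pos x H).
  apply Rdiv_le_0_compat; lra.
Qed.

Lemma cos_rem_near0 x : Rabs x <= 1 -> Rabs (cos_rem x - / 24) <= x ^ 2 / 720.
Proof.
intros Hx. destruct (Req_dec x 0) as [->|H].
{ rewrite cos_rem_0, Rminus_diag, Rabs_R0. simpl; lra. }
rewrite cos_rem_neq0 by exact H. pose proof (pow4_pos x H) as H4.
destruct (cos_taylor_bounds x Hx) as [Hl Hu].
assert (Hx2 : x ^ 2 <= 1) by (apply Rabs_le_between in Hx; nra).
assert (H6 : 0 <= x ^ 6) by (replace (x ^ 6) with ((x ^ 3) ^ 2) by ring; apply pow2_ge_0).
assert (H8 : x ^ 8 <= x ^ 6) by (replace (x ^ 8) with (x ^ 6 * x ^ 2) by ring; nra).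
replace ((cos x - 1 + x ^ 2 / 2) / x ^ 4 - / 24)
  with ((cos x - 1 + x ^ 2 / 2 - x ^ 4 / 24) / x ^ 4) by (field; lra).
rewrite Rabs_div by lra. rewrite (Rabs_right (x ^ 4)) by lra.
apply Rle_div_l; [lra|]. apply Rabs_le. nra.
Qed.

Lemma cos_rem_le x : cos_rem x <= / (1 + x ^ 2).
Proof.
assert (Hp : 0 < 1 + x ^ 2) by (pose proof (pow2_ge_0 x); lra).
destruct (Rle_dec (Rabs x) 1) as [H1|H1].
- pose proof (cos_rem_near0 x H1) as H. apply Rabs_le_between in H.
  assert (x ^ 2 <= 1) by (apply Rabs_le_between in H1; nra).
  assert (/ 2 <= / (1 + x ^ 2)) by (apply Rinv_le_contravar; lra). lra.
- assert (Hx0 : x <> 0) by (intro; subst; rewrite Rabs_R0 in H1; lra).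
  rewrite cos_rem_neq0 by exact Hx0. pose proof (pow4_pos x Hx0).
  assert (Hx2 : 1 < x ^ 2) by (rewrite <- pow2_abs; nra).
  pose proof (COS_bound x).
  apply Rle_div_l; [lra|].
  replace (/ (1 + x ^ 2) * x ^ 4) with (x ^ 4 / (1 + x ^ 2)) by (field; lra).
  apply Rle_div_r; [lra|].
  replace (x ^ 4) with (x ^ 2 * x ^ 2) by ring. nra.
Qed.

Lemma cos_rem_continuous x : continuous cos_rem x.
Proof.
destruct (Req_dec x 0) as [->|Hx].
- apply continuity_pt_filterlim. unfold continuity_pt, continue_in, limit1_in, limit_in.
  intros eps Heps. exists (Rmin 1 eps).
  split; [apply Rmin_pos; lra|]. intros y [_ Hy]. simpl in *. unfold R_dist in *.
  rewrite Rminus_0_r in Hy. rewrite cos_rem_0.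
  assert (Hy1 : Rabs y <= 1) by (pose proof (Rmin_l 1 eps); lra).
  assert (Hye : Rabs y < eps) by (pose proof (Rmin_r 1 eps); lra).
  pose proof (cos_rem_near0 y Hy1).
  assert (y ^ 2 <= Rabs y) by (rewrite <- pow2_abs; pose proof (Rabs_pos y); nra).
  lra.
- apply (continuous_ext_loc _ (fun y => (cos y - 1 + y ^ 2 / 2) / y ^ 4)).
  + exists (mkposreal (Rabs x) (Rabs_pos_lt x Hx)). intros y Hy.
    rewrite cos_rem_neq0; [reflexivity|]. intros ->.
    cbn in Hy; unfold AbsRing_ball, abs, minus, plus, opp in Hy; simpl in Hy.
    rewrite Rplus_0_l, Rabs_Ropp in Hy. lra.
  + apply continuity_pt_filterlim, continuity_pt_div; [reg|reg|].
    pose proof (pow4_pos x Hx). lra.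
Qed.
#[local] Hint Resolve cos_rem_continuous : continuous_R.

Definition cos_rem_int (X : R) : R := RInt cos_rem (- X) X.

Lemma ex_RInt_cos_rem a b : ex_RInt cos_rem a b.
Proof. apply ex_RInt_continuous_R, cos_rem_continuous. Qed.

Lemma cos_rem_int_incr X Y : 0 <= X <= Y -> cos_rem_int X <= cos_rem_int Y.
Proof.
intros [H0 H1]. unfold cos_rem_int.
rewrite <- (RInt_Chasles cos_rem (- Y) (- X) Y), <- (RInt_Chasles cos_rem (- X) X Y)
  by apply ex_RInt_cos_rem.
assert (0 <= RInt cos_rem (- Y) (- X))
  by (apply RInt_ge_0; [lra|apply ex_RInt_cos_rem|intros; apply cos_rem_ge0]).
assert (0 <= RInt cos_rem X Y)
  by (apply RInt_ge_0; [lra|apply ex_RInt_cos_rem|intros; apply cos_rem_ge0]).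
set (u := RInt cos_rem (- Y) (- X)) in *; set (v := RInt cos_rem X Y) in *.
change (RInt cos_rem (- X) X <= u + (RInt cos_rem (- X) X + v)). lra.
Qed.

Lemma cos_rem_int_le_PI X : 0 <= X -> cos_rem_int X <= PI.
Proof.
intros H. unfold cos_rem_int.
apply Rle_trans with (RInt (fun x => / (1 + x ^ 2)) (- X) X).
- apply RInt_le; [lra|apply ex_RInt_cos_rem| |intros; apply cos_rem_le].
  apply ex_RInt_continuous_R. intros x. apply continuity_pt_filterlim.
  apply continuity_pt_inv; [reg|]. pose proof (pow2_ge_0 x). lra.
- assert (E : RInt (fun x => / (1 + x ^ 2)) (- X) X = atan X - atan (- X)).
  { apply is_RInt_unique, (is_RInt_ext (fun x => / (1 + x²))).
    { intros x _. unfold Rsqr. f_equal. ring. }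
    apply (is_RInt_derive atan).
    - intros x _. apply is_derive_atan.
    - intros x _. apply continuity_pt_filterlim, continuity_pt_inv; [reg|].
      pose proof (Rle_0_sqr x). lra. }
  rewrite E. pose proof (atan_bound X). pose proof (atan_bound (- X)). lra.
Qed.

Lemma cos_rem_int_1_pos : 0 < cos_rem_int 1.
Proof.
unfold cos_rem_int. apply RInt_gt_0; [lra| |intros; apply cos_rem_continuous].
intros x Hx. assert (Hx1 : Rabs x <= 1) by (apply Rabs_le; lra).
pose proof (cos_rem_near0 x Hx1) as H. apply Rabs_le_between in H.
assert (x ^ 2 <= 1) by nra. lra.
Qed.

Definition cos_rem_int_range (y : R) : Prop := exists X, 0 <= X /\ y = cos_rem_int X.

Lemma cos_rem_int_range_bound : bound cos_rem_int_range.
Proof. exists PI. intros y [X [HX ->]]. apply cos_rem_int_le_PI; exact HX. Qed.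

Lemma cos_rem_int_range_inhabited : exists y, cos_rem_int_range y.
Proof. exists (cos_rem_int 0), 0. split; [lra|reflexivity]. Qed.

(* [kappa] is the improper integral of [cos_rem] over the real line (it equals
   [PI/6], but only its positivity is ever used). *)
Definition kappa : R :=
  proj1_sig (completeness _ cos_rem_int_range_bound cos_rem_int_range_inhabited).

Lemma kappa_lub : is_lub cos_rem_int_range kappa.
Proof. unfold kappa. destruct completeness; assumption. Qed.

Lemma kappa_pos : 0 < kappa.
Proof.
destruct kappa_lub as [H _]. pose proof cos_rem_int_1_pos.
assert (cos_rem_int 1 <= kappa) by (apply H; exists 1; split; [lra|reflexivity]). lra.
Qed.

Lemma is_lim_cos_rem_int : is_lim cos_rem_int p_infty kappa.
Proof.
apply is_lim_spec. intros eps. destruct kappa_lub as [Hub Hlub].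
assert (exists X0, 0 <= X0 /\ kappa - eps < cos_rem_int X0) as [X0 [HX0 Hlt]].
{ apply Classical_Prop.NNPP. intros Hn.
  assert (is_upper_bound cos_rem_int_range (kappa - eps)).
  { intros y [X [HX ->]]. apply Rnot_lt_le. intro Hc. apply Hn. exists X; auto. }
  pose proof (cond_pos eps). apply Hlub in H. lra. }
exists X0. intros X HX. assert (cos_rem_int X0 <= cos_rem_int X) by (apply cos_rem_int_incr; lra).
assert (cos_rem_int X <= kappa) by (apply Hub; exists X; split; [lra|reflexivity]).
pose proof (cond_pos eps). apply Rabs_lt_between'. lra.
Qed.

Definition is_sym_RInt (g : R -> R) (L : R) : Prop :=
  is_lim (fun T => RInt g (- T) T) p_infty L.

Lemma is_sym_RInt_ext g1 g2 L :
  (forall x, g1 x = g2 x) -> is_sym_RInt g1 L -> is_sym_RInt g2 L.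
Proof. intros E. apply is_lim_ext. intros T. apply RInt_ext. intros; apply E. Qed.

Lemma is_sym_RInt_eq g L1 L2 : L1 = L2 -> is_sym_RInt g L1 -> is_sym_RInt g L2.
Proof. intros <-; trivial. Qed.

Lemma is_sym_RInt_plus g1 g2 L1 L2 :
  (forall x, continuous g1 x) -> (forall x, continuous g2 x) ->
  is_sym_RInt g1 L1 -> is_sym_RInt g2 L2 -> is_sym_RInt (fun x => g1 x + g2 x) (L1 + L2).
Proof.
intros C1 C2 H1 H2. eapply is_lim_ext; [|apply (is_lim_plus' _ _ _ _ _ H1 H2)].
intros T. symmetry. apply (RInt_plus (V:=R_CompleteNormedModule)); apply ex_RInt_continuous_R; auto.
Qed.

Lemma is_sym_RInt_scal c g L :
  (forall x, continuous g x) -> is_sym_RInt g L -> is_sym_RInt (fun x => c * g x) (c * L).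
Proof.
intros C H. eapply is_lim_ext; [|exact (is_lim_scal_l _ c _ _ H)].
intros T. symmetry. apply (RInt_scal (V:=R_CompleteNormedModule)), ex_RInt_continuous_R, C.
Qed.

Lemma is_sym_RInt_minus g1 g2 L1 L2 :
  (forall x, continuous g1 x) -> (forall x, continuous g2 x) ->
  is_sym_RInt g1 L1 -> is_sym_RInt g2 L2 -> is_sym_RInt (fun x => g1 x - g2 x) (L1 - L2).
Proof.
intros C1 C2 H1 H2. eapply is_lim_ext; [|apply (is_lim_minus' _ _ _ _ _ H1 H2)].
intros T. symmetry.
apply (RInt_minus (V:=R_CompleteNormedModule)); apply ex_RInt_continuous_R; auto.
Qed.

Ltac sym_RInt_linear :=
  repeat match goal with
  | |- forall x, continuous _ x => intro; solve_continuous
  | |- is_sym_RInt (fun x => @?u x + @?v x) _ => apply (is_sym_RInt_plus u v)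
  | |- is_sym_RInt (fun x => @?u x - @?v x) _ => apply (is_sym_RInt_minus u v)
  | |- is_sym_RInt (fun x => ?c * @?u x) _ => apply (is_sym_RInt_scal c u)
  end.

Lemma RInt_sym_odd (g : R -> R) T :
  (forall x, g (- x) = - g x) -> (forall x, continuous g x) -> RInt g (- T) T = 0.
Proof.
intros Hodd C. assert (Hex : ex_RInt g T (- T)) by (apply ex_RInt_continuous_R, C).
assert (E : RInt g (- T) T = RInt g T (- T)).
{ apply is_RInt_unique, (is_RInt_ext (fun y => opp (g (- y)))).
  - intros x _. rewrite Hodd. cbn. ring.
  - apply (is_RInt_comp_opp (V:=R_NormedModule)). rewrite Ropp_involutive.
    exact (RInt_correct (V:=R_CompleteNormedModule) _ _ _ Hex). }
rewrite <- (opp_RInt_swap (V:=R_CompleteNormedModule) g T (- T) Hex) in E |- *.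
cbn in *. lra.
Qed.

Lemma is_sym_RInt_odd g :
  (forall x, g (- x) = - g x) -> (forall x, continuous g x) -> is_sym_RInt g 0.
Proof.
intros Hodd C. apply (is_lim_ext (fun _ => 0)); [|apply is_lim_const].
intros T. symmetry. apply RInt_sym_odd; assumption.
Qed.

Lemma is_sym_RInt_abs_le g L M :
  is_sym_RInt g L -> (forall T, 0 <= T -> Rabs (RInt g (- T) T) <= M) -> Rabs L <= M.
Proof.
intros H HM. apply (is_lim_le_loc (fun T => Rabs (RInt g (- T) T)) (fun _ => M) p_infty
  (Rbar_abs L) M).
- exists 0. intros T HT. apply HM; lra.
- exact (is_lim_Rabs _ _ _ H).
- apply is_lim_const.
Qed.

(** * The kernel [sinc4] and its Fourier transform *)

Definition rho (b h : R) : R := b ^ 4 * cos_rem (b * h).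

Lemma rho_neq0 b h : h <> 0 -> rho b h = (cos (b * h) - 1 + b ^ 2 * h ^ 2 / 2) / h ^ 4.
Proof.
intros Hh. unfold rho. destruct (Req_dec b 0) as [->|Hb].
- rewrite Rmult_0_l, cos_0. field. exact Hh.
- rewrite cos_rem_neq0 by (intro H; apply Rmult_integral in H; tauto).
  field. tauto.
Qed.

Lemma rho_0 b : rho b 0 = b ^ 4 / 24.
Proof. unfold rho. rewrite Rmult_0_r, cos_rem_0. field. Qed.

Lemma rho_continuous b h : continuous (rho b) h.
Proof. unfold rho. solve_continuous. Qed.
#[local] Hint Resolve rho_continuous : continuous_R.

Lemma RInt_rho b T : RInt (rho b) (- T) T = Rabs b ^ 3 * cos_rem_int (Rabs b * T).
Proof.
assert (E : RInt (rho b) (- T) T = b ^ 3 * cos_rem_int (b * T)).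
{ unfold cos_rem_int.
  assert (Hlin : RInt cos_rem (- (b * T)) (b * T)
                 = RInt (fun y => scal b (cos_rem (b * y + 0))) (- T) T).
  { transitivity (RInt cos_rem (b * - T + 0) (b * T + 0)); [f_equal; ring|].
    symmetry. apply (RInt_comp_lin cos_rem b 0 (- T) T), ex_RInt_cos_rem. }
  rewrite Hlin. change (b ^ 3 * ?I) with (scal (b ^ 3) I).
  rewrite <- (RInt_scal (V:=R_CompleteNormedModule)).
  - apply RInt_ext. intros x _. unfold rho. cbn. unfold mult; simpl.
    rewrite Rplus_0_r. ring.
  - apply (ex_RInt_ext (fun y => b * cos_rem (b * y + 0))); [intros; reflexivity|].
    apply ex_RInt_continuous_R. intros x. solve_continuous. }
rewrite E. destruct (Rle_dec 0 b).
- rewrite Rabs_right by lra. reflexivity.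
- rewrite Rabs_left by lra. unfold cos_rem_int.
  replace (- b * T) with (- (b * T)) by ring. rewrite Ropp_involutive.
  rewrite <- (opp_RInt_swap (V:=R_CompleteNormedModule)) by apply ex_RInt_cos_rem.
  cbn. ring.
Qed.

Lemma is_sym_RInt_rho b : is_sym_RInt (rho b) (Rabs b ^ 3 * kappa).
Proof.
unfold is_sym_RInt. eapply is_lim_ext; [intros T; symmetry; apply RInt_rho|].
destruct (Req_dec b 0) as [->|Hb].
- rewrite Rabs_R0. eapply is_lim_ext; [|apply (is_lim_const (0 ^ 3 * kappa))].
  intros T. simpl. ring.
- apply (is_lim_scal_l (fun T => cos_rem_int (Rabs b * T)) (Rabs b ^ 3) p_infty kappa).
  pose proof (Rabs_pos_lt b Hb) as Hpos.
  apply (is_lim_ext (fun T => cos_rem_int (Rabs b * T + 0)));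
    [intros T; rewrite Rplus_0_r; reflexivity|].
  apply is_lim_comp_lin; [|lra].
  replace (Rbar_plus (Rbar_mult (Rabs b) p_infty) 0) with p_infty; [apply is_lim_cos_rem_int|].
  simpl. destruct Rle_dec as [H|H]; [destruct Rle_lt_or_eq_dec|]; simpl; auto; lra.
Qed.

Definition sinc4 (x : R) : R := if Req_EM_T x 0 then 1 else (sin x / x) ^ 4.

Lemma sinc4_neq0 x : x <> 0 -> sinc4 x = (sin x / x) ^ 4.
Proof. intros H. unfold sinc4. destruct (Req_EM_T x 0); [contradiction|reflexivity]. Qed.

Lemma sinc4_0 : sinc4 0 = 1.
Proof. unfold sinc4. destruct (Req_EM_T 0 0); [reflexivity|contradiction]. Qed.

Lemma sinc4_opp x : sinc4 (- x) = sinc4 x.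
Proof.
destruct (Req_dec x 0) as [->|H]; [rewrite Ropp_0; reflexivity|].
rewrite !sinc4_neq0 by lra. rewrite sin_neg. f_equal. field. exact H.
Qed.

Lemma sin_pow4_cos l x :
  8 * sin x ^ 4 * cos l = 3 * cos l - 2 * cos (l + 2 * x) - 2 * cos (l - 2 * x)
                          + / 2 * cos (l + 4 * x) + / 2 * cos (l - 4 * x).
Proof.
replace (4 * x) with (2 * (2 * x)) by ring.
rewrite !cos_plus, !cos_minus, !cos_2a_sin, (sin_2a (2 * x)), !cos_2a_sin, !sin_2a.
pose proof (sin2_cos2 x) as H. unfold Rsqr in H.
ring_simplify. replace (cos x ^ 2) with (1 - sin x ^ 2) by nra. field.
Qed.

(* By [sin_pow4_cos], [sinc4 (d h) cos (l h)] is this combination of the [rho]'s: their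
   polynomial parts [1 - b^2 h^2 / 2] cancel, since the weights [3, -2, -2, 1/2, 1/2]
   annihilate [1] and [b^2] at the nodes [b = l, l +- 2d, l +- 4d]. *)
Definition rho_comb (d l h : R) : R :=
  / (8 * d ^ 4) * (3 * rho l h - 2 * rho (l + 2 * d) h - 2 * rho (l - 2 * d) h
                   + / 2 * rho (l + 4 * d) h + / 2 * rho (l - 4 * d) h).

Lemma sinc4_cos_eq d l h : d <> 0 -> sinc4 (d * h) * cos (l * h) = rho_comb d l h.
Proof.
intros Hd. unfold rho_comb. destruct (Req_dec h 0) as [->|Hh].
{ rewrite Rmult_0_r, sinc4_0, Rmult_0_r, cos_0, !rho_0. field. exact Hd. }
assert (Hdh : d * h <> 0) by (intro H; apply Rmult_integral in H; tauto).
rewrite sinc4_neq0, !rho_neq0 by assumption.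
replace ((l + 2 * d) * h) with (l * h + 2 * (d * h)) by ring.
replace ((l - 2 * d) * h) with (l * h - 2 * (d * h)) by ring.
replace ((l + 4 * d) * h) with (l * h + 4 * (d * h)) by ring.
replace ((l - 4 * d) * h) with (l * h - 4 * (d * h)) by ring.
pose proof (sin_pow4_cos (l * h) (d * h)) as T.
set (c2 := cos (l * h + 2 * (d * h))) in *.
replace c2 with ((3 * cos (l * h) - 2 * cos (l * h - 2 * (d * h)) + / 2 * cos (l * h + 4 * (d * h))
  + / 2 * cos (l * h - 4 * (d * h)) - 8 * sin (d * h) ^ 4 * cos (l * h)) / 2) by lra.
field. split; assumption.
Qed.

Lemma rho_comb_continuous d l h : continuous (rho_comb d l) h.
Proof. unfold rho_comb. solve_continuous. Qed.

Lemma sinc4_continuous x : continuous sinc4 x.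
Proof.
apply (continuous_ext_loc _ (rho_comb 1 0)).
- apply filter_forall. intros y. rewrite <- sinc4_cos_eq by lra.
  rewrite Rmult_0_l, cos_0, Rmult_1_l, Rmult_1_r. reflexivity.
- apply rho_comb_continuous.
Qed.
#[local] Hint Resolve sinc4_continuous : continuous_R.

(* [sinc4_ft d] is the Fourier transform of [h |-> sinc4 (d h)], a cubic spline
   supported in [[-4d, 4d]]. *)
Definition sinc4_ft (d l : R) : R :=
  kappa / (8 * d ^ 4) * (3 * Rabs l ^ 3 - 2 * Rabs (l + 2 * d) ^ 3 - 2 * Rabs (l - 2 * d) ^ 3
                         + / 2 * Rabs (l + 4 * d) ^ 3 + / 2 * Rabs (l - 4 * d) ^ 3).

Lemma sinc4_ft_eq0 d l : 0 < d -> 4 * d <= Rabs l -> sinc4_ft d l = 0.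
Proof.
intros Hd Hl. unfold sinc4_ft. destruct (Rle_dec 0 l).
- rewrite Rabs_right in Hl by lra.
  rewrite (Rabs_right l), (Rabs_right (l + 2 * d)), (Rabs_right (l - 2 * d)),
    (Rabs_right (l + 4 * d)), (Rabs_right (l - 4 * d)) by lra.
  field. lra.
- rewrite Rabs_left in Hl by lra.
  rewrite (Rabs_left l), (Rabs_left (l + 2 * d)), (Rabs_left (l - 2 * d)),
    (Rabs_left1 (l + 4 * d)), (Rabs_left (l - 4 * d)) by lra.
  field. lra.
Qed.

Lemma sinc4_ft_0 d : 0 < d -> sinc4_ft d 0 = 4 * kappa / d.
Proof.
intros Hd. unfold sinc4_ft.
rewrite Rplus_0_l, Rminus_0_l, Rplus_0_l, Rminus_0_l, Rabs_R0, !Rabs_Ropp.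
rewrite (Rabs_right (2 * d)), (Rabs_right (4 * d)) by lra. field. lra.
Qed.

Lemma is_sym_RInt_sinc4_cos d l :
  d <> 0 -> is_sym_RInt (fun h => sinc4 (d * h) * cos (l * h)) (sinc4_ft d l).
Proof.
intros Hd. apply (is_sym_RInt_ext (rho_comb d l)); [intros; symmetry; apply sinc4_cos_eq, Hd|].
eapply is_sym_RInt_eq; [|unfold rho_comb; sym_RInt_linear; apply is_sym_RInt_rho].
unfold sinc4_ft. field. exact Hd.
Qed.

Lemma is_sym_RInt_sinc4_cos_shift d l s :
  d <> 0 -> is_sym_RInt (fun h => sinc4 (d * h) * cos (l * h + s)) (cos s * sinc4_ft d l).
Proof.
intros Hd.
apply (is_sym_RInt_ext (fun h => cos s * (sinc4 (d * h) * cos (l * h))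
                                 - sin s * (sinc4 (d * h) * sin (l * h)))).
{ intros h. rewrite cos_plus. ring. }
eapply is_sym_RInt_eq;
  [|sym_RInt_linear; [apply is_sym_RInt_sinc4_cos, Hd|apply is_sym_RInt_odd]].
- ring.
- intros x. replace (d * - x) with (- (d * x)) by ring. replace (l * - x) with (- (l * x)) by ring.
  rewrite sinc4_opp, sin_neg. ring.
- intros; solve_continuous.
Qed.

Lemma is_sym_RInt_sinc4_sin_shift d l s :
  d <> 0 -> is_sym_RInt (fun h => sinc4 (d * h) * sin (l * h + s)) (sin s * sinc4_ft d l).
Proof.
intros Hd. assert (Hshift : forall x, sin x = cos (x + - (PI / 2))).
{ intros x. rewrite cos_plus, cos_neg, sin_neg, cos_PI2, sin_PI2. ring. }
rewrite Hshift. apply (is_sym_RInt_ext (fun h => sinc4 (d * h) * cos (l * h + (s + - (PI / 2))))).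
{ intros h. rewrite Hshift, Rplus_assoc. reflexivity. }
apply is_sym_RInt_sinc4_cos_shift, Hd.
Qed.

Ltac sinc4_shift_leaf Hd :=
  match goal with
  | |- is_sym_RInt (fun h => sinc4 (_ * h) * cos (_ * h + _)) _ =>
      apply is_sym_RInt_sinc4_cos_shift, Hd
  | |- is_sym_RInt (fun h => sinc4 (_ * h) * sin (_ * h + _)) _ =>
      apply is_sym_RInt_sinc4_sin_shift, Hd
  end.

Lemma sinc4_ge0 x : 0 <= sinc4 x.
Proof.
destruct (Req_dec x 0) as [->|H]; [rewrite sinc4_0; lra|].
rewrite sinc4_neq0 by exact H. replace ((sin x / x) ^ 4) with (((sin x / x) ^ 2) ^ 2) by ring.
apply pow2_ge_0.
Qed.

Lemma sinc4_le1 x : sinc4 x <= 1.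
Proof.
destruct (Req_dec x 0) as [->|H]; [rewrite sinc4_0; lra|].
rewrite sinc4_neq0 by exact H.
assert (Hq : Rabs (sin x / x) <= 1).
{ rewrite Rabs_div by exact H. pose proof (Rabs_pos_lt x H). pose proof (Rabs_sin_le x).
  apply Rle_div_l; lra. }
apply Rabs_le_between in Hq. set (u := sin x / x) in *.
assert (u ^ 2 <= 1) by nra. assert (0 <= u ^ 2) by apply pow2_ge_0.
replace (u ^ 4) with (u ^ 2 * u ^ 2) by ring. nra.
Qed.

Lemma sinc4_mul_pow4_le1 x : sinc4 x * x ^ 4 <= 1.
Proof.
destruct (Req_dec x 0) as [->|H]; [rewrite sinc4_0; simpl; lra|].
rewrite sinc4_neq0 by exact H.
replace ((sin x / x) ^ 4 * x ^ 4) with (sin x ^ 4) by (field; exact H).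
pose proof (SIN_bound x). assert (sin x ^ 2 <= 1) by nra.
assert (0 <= sin x ^ 2) by apply pow2_ge_0.
replace (sin x ^ 4) with (sin x ^ 2 * sin x ^ 2) by ring. nra.
Qed.

Lemma sinc4_le_lorentz d h : sinc4 (d * h) <= 2 / (1 + (d * h) ^ 2).
Proof.
set (x := d * h). pose proof (sinc4_le1 x). pose proof (sinc4_ge0 x).
pose proof (sinc4_mul_pow4_le1 x). pose proof (pow2_ge_0 x).
apply Rle_div_r; [lra|].
assert (sinc4 x * x ^ 2 <= 1).
{ destruct (Rle_dec (x ^ 2) 1); [nra|].
  assert (x ^ 2 <= x ^ 4) by (replace (x ^ 4) with (x ^ 2 * x ^ 2) by ring; nra). nra. }
lra.
Qed.

Lemma Rabs_mul_sinc4_le d h : 0 < d -> Rabs h * sinc4 (d * h) <= (2 / d) / (1 + (d * h) ^ 2).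
Proof.
intros Hd. set (x := d * h). pose proof (sinc4_le1 x). pose proof (sinc4_ge0 x).
pose proof (sinc4_mul_pow4_le1 x). pose proof (pow2_ge_0 x).
assert (Ha : Rabs x = d * Rabs h) by (unfold x; rewrite Rabs_mult, (Rabs_right d) by lra; ring).
set (a := Rabs x) in *. assert (0 <= a) by apply Rabs_pos.
assert (E2 : x ^ 2 = a ^ 2) by (unfold a; symmetry; apply pow2_abs).
assert (E4 : x ^ 4 = (a ^ 2) ^ 2) by (rewrite <- E2; ring).
rewrite E2. rewrite E4 in *.
assert (a * (1 + a ^ 2) <= 1 + (a ^ 2) ^ 2).
{ assert (0 <= (1 - a) ^ 2 * (1 + a + a ^ 2)) by (apply Rmult_le_pos; [apply pow2_ge_0|nra]).
  replace (1 + (a ^ 2) ^ 2) with (a * (1 + a ^ 2) + (1 - a) ^ 2 * (1 + a + a ^ 2)) by ring. lra. }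
pose proof (pow2_ge_0 a).
apply (Rmult_le_reg_r (d * (1 + a ^ 2))); [apply Rmult_lt_0_compat; lra|].
replace (2 / d / (1 + a ^ 2) * (d * (1 + a ^ 2))) with 2 by (field; lra).
replace (Rabs h * sinc4 x * (d * (1 + a ^ 2))) with (sinc4 x * (a * (1 + a ^ 2)))
  by (rewrite Ha; ring).
nra.
Qed.

Lemma sqr_mul_sinc4_le d h : 0 < d -> h ^ 2 * sinc4 (d * h) <= (4 / d ^ 2) / (1 + (d * h) ^ 2).
Proof.
intros Hd. set (x := d * h). pose proof (sinc4_le1 x). pose proof (sinc4_ge0 x).
pose proof (sinc4_mul_pow4_le1 x). pose proof (pow2_ge_0 x).
assert (0 < d ^ 2) by (apply pow_lt; lra).
apply (Rmult_le_reg_r (d ^ 2 * (1 + x ^ 2))); [apply Rmult_lt_0_compat; lra|].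
replace (4 / d ^ 2 / (1 + x ^ 2) * (d ^ 2 * (1 + x ^ 2))) with 4 by (field; lra).
replace (h ^ 2 * sinc4 x * (d ^ 2 * (1 + x ^ 2))) with (sinc4 x * (x ^ 2 * (1 + x ^ 2)))
  by (unfold x; ring).
assert (x ^ 2 * (1 + x ^ 2) <= 2 * (1 + x ^ 4)) by nra.
nra.
Qed.

Lemma Rabs_mul_le_lorentz d h A B C x y : 0 < d -> 0 <= A -> 0 <= B -> 0 <= C ->
  Rabs x <= A * Rabs h + B * h ^ 2 + C -> Rabs y <= sinc4 (d * h) ->
  Rabs (x * y) <= (2 * A / d + 4 * B / d ^ 2 + 2 * C) / (1 + (d * h) ^ 2).
Proof.
intros Hd HA HB HC Hx Hy. pose proof (pow2_ge_0 (d * h)). rewrite Rabs_mult.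
pose proof (sinc4_le_lorentz d h). pose proof (Rabs_mul_sinc4_le d h Hd) as H1.
pose proof (sqr_mul_sinc4_le d h Hd) as H2.
apply Rle_trans with ((A * Rabs h + B * h ^ 2 + C) * sinc4 (d * h));
  [apply Rmult_le_compat; auto using Rabs_pos|].
replace ((2 * A / d + 4 * B / d ^ 2 + 2 * C) / (1 + (d * h) ^ 2))
  with (A * (2 / d / (1 + (d * h) ^ 2)) + B * (4 / d ^ 2 / (1 + (d * h) ^ 2))
        + C * (2 / (1 + (d * h) ^ 2))) by (field; lra).
pose proof (Rmult_le_compat_l A _ _ HA H1). pose proof (Rmult_le_compat_l B _ _ HB H2).
assert (C * sinc4 (d * h) <= C * (2 / (1 + (d * h) ^ 2))) by (apply Rmult_le_compat_l; lra).
nra.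
Qed.

Lemma RInt_lorentz_le c d T : 0 <= c -> 0 < d ->
  RInt (fun h => c / (1 + (d * h) ^ 2)) (- T) T <= c * PI / d.
Proof.
intros Hc Hd.
assert (E : RInt (fun h => c / (1 + (d * h) ^ 2)) (- T) T
            = c / d * atan (d * T) - c / d * atan (d * - T)).
{ apply is_RInt_unique.
  apply (is_RInt_ext (fun h => c / d * (d * / (1 + (d * h) ^ 2)))).
  { intros x _. match goal with |- ?u = ?v => change (@eq R u v) end.
    field. split; [|lra]. pose proof (pow2_ge_0 (d * x)). lra. }
  apply (is_RInt_derive (V:=R_CompleteNormedModule) (fun h => c / d * atan (d * h))).
  - intros x _. apply (is_derive_scal (fun h => atan (d * h))).
    replace ((d * x) ^ 2) with ((d * x)²) by (unfold Rsqr; ring).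
    apply (is_derive_comp atan (fun h => d * h)); [apply is_derive_atan|].
    auto_derive; [exact I|ring].
  - intros x _. apply continuity_pt_filterlim.
    apply continuity_pt_mult; [reg|]. apply continuity_pt_mult; [reg|].
    apply continuity_pt_inv; [reg|]. pose proof (pow2_ge_0 (d * x)). lra. }
rewrite E. pose proof (atan_bound (d * T)). pose proof (atan_bound (d * - T)).
assert (0 <= c / d) by (apply Rdiv_le_0_compat; lra).
replace (c * PI / d) with (c / d * PI) by (field; lra). nra.
Qed.

Lemma Rabs_RInt_le_lorentz (g : R -> R) c d T : (forall x, continuous g x) ->
  (forall h, Rabs (g h) <= c / (1 + (d * h) ^ 2)) -> 0 <= c -> 0 < d -> 0 <= T ->
  Rabs (RInt g (- T) T) <= c * PI / d.
Proof.
intros C Hb Hc Hd HT.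
eapply Rle_trans; [apply abs_RInt_le; [lra|apply ex_RInt_continuous_R, C]|].
eapply Rle_trans; [|apply (RInt_lorentz_le c d T Hc Hd)].
apply RInt_le; [lra| | |intros; apply Hb].
- apply ex_RInt_continuous_R. intros x. apply continuous_Rabs_comp, C.
- apply ex_RInt_continuous_R. intros x.
  apply continuity_pt_filterlim, continuity_pt_div; [reg|reg|].
  pose proof (pow2_ge_0 (d * x)). lra.
Qed.

(** * Trigonometric series with summable coefficients *)

Lemma Un_cv_abs_sub_le (u : nat -> R) L c B N :
  Un_cv u L -> (forall m, (N <= m)%nat -> Rabs (u m - c) <= B) -> Rabs (L - c) <= B.
Proof.
intros Hu Hb. apply Rnot_lt_le. intros Hlt.
destruct (Hu (Rabs (L - c) - B)) as [N0 HN0]; [lra|].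
specialize (HN0 (max N N0) ltac:(lia)). specialize (Hb (max N N0) ltac:(lia)).
unfold R_dist in HN0.
pose proof (Rabs_triang (- (u (max N N0) - L)) (u (max N N0) - c)) as Htri.
rewrite Rabs_Ropp in Htri. replace (- (u (max N N0) - L) + (u (max N N0) - c)) with (L - c) in Htri
  by ring.
lra.
Qed.

Lemma Rle_of_le_add_vanishing x y c (u : nat -> R) N :
  (forall n, (N <= n)%nat -> x <= y + c * u n) -> Un_cv u 0 -> x <= y.
Proof.
intros Hle Hu. apply Rnot_lt_le. intros Hlt.
destruct (Hu ((x - y) / (Rabs c + 1))) as [N0 HN0].
{ apply Rdiv_lt_0_compat; [lra|pose proof (Rabs_pos c); lra]. }
specialize (HN0 (max N N0) ltac:(lia)). specialize (Hle (max N N0) ltac:(lia)).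
unfold R_dist in HN0. rewrite Rminus_0_r in HN0.
set (v := u (max N N0)) in *. pose proof (Rabs_pos c).
assert (c * v <= Rabs c * Rabs v) by (rewrite <- Rabs_mult; apply Rle_abs).
assert (Rabs c * Rabs v <= (Rabs c + 1) * Rabs v) by (pose proof (Rabs_pos v); nra).
apply Rlt_div_r in HN0; [|lra]. lra.
Qed.

Lemma Rabs_le_lin_quad_of_local (E : R -> R) A delta C :
  0 < delta -> 0 <= A -> (forall h, Rabs h < delta -> Rabs (E h) <= A * Rabs h) ->
  (forall h, Rabs (E h) <= C) -> exists B, 0 <= B /\ forall h, Rabs (E h) <= A * Rabs h + B * h ^ 2.
Proof.
intros Hdelta HA Hloc HC. pose proof (Rle_trans _ _ _ (Rabs_pos _) (HC 0)) as HC0.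
assert (0 < delta ^ 2) by (apply pow_lt; exact Hdelta).
exists (C / delta ^ 2). split; [apply Rdiv_le_0_compat; lra|]. intros h.
pose proof (Rabs_pos h). pose proof (pow2_ge_0 h).
assert (0 <= C / delta ^ 2 * h ^ 2) by (apply Rmult_le_pos; [apply Rdiv_le_0_compat|]; lra).
destruct (Rlt_dec (Rabs h) delta) as [Hlt|Hge]; [specialize (Hloc h Hlt); nra|].
assert (delta ^ 2 <= h ^ 2) by (rewrite <- (pow2_abs h); apply pow_incr; lra).
assert (C <= C / delta ^ 2 * h ^ 2).
{ apply (Rmult_le_reg_r (delta ^ 2)); [lra|].
  replace (C / delta ^ 2 * h ^ 2 * delta ^ 2) with (C * h ^ 2) by (field; lra). nra. }
specialize (HC h). nra.
Qed.

(* Subtracting [l / w * sin (w h)] removes the linear term of [F (t0 + h) - F t0] while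
   staying bounded, so the remainder is [o(h)] near 0 and [O(h^2)] far from 0. *)
Lemma derivable_pt_lim_sin_expansion F t0 l w M :
  derivable_pt_lim F t0 l -> 0 < w -> (forall t, Rabs (F t) <= M) ->
  forall A, 0 < A -> exists B, 0 <= B /\
    forall h, Rabs (F (t0 + h) - (F t0 + l / w * sin (w * h))) <= A * Rabs h + B * h ^ 2.
Proof.
intros Hd Hw HM A HA.
set (E := fun h => F (t0 + h) - (F t0 + l / w * sin (w * h))).
assert (HE : derivable_pt_lim E 0 0).
{ replace 0 with (l * 1 - (0 + l / w * (cos (w * 0) * (w * 1)))) at 2
    by (rewrite Rmult_0_r, cos_0; field; lra).
  apply derivable_pt_lim_minus.
  - apply (derivable_pt_lim_comp (fun h => t0 + h) F).
    + replace 1 with (0 + 1) by ring.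
      apply derivable_pt_lim_plus; [apply derivable_pt_lim_const|apply derivable_pt_lim_id].
    + rewrite Rplus_0_r. exact Hd.
  - apply derivable_pt_lim_plus; [apply derivable_pt_lim_const|]. apply derivable_pt_lim_scal.
    apply (derivable_pt_lim_comp (fun h => w * h) sin);
      [apply derivable_pt_lim_scal, derivable_pt_lim_id|apply derivable_pt_lim_sin]. }
destruct (HE A HA) as [delta Hdelta].
apply (Rabs_le_lin_quad_of_local E A delta (2 * M + Rabs l / w)); [apply cond_pos|lra| |].
- assert (E0 : E 0 = 0) by (unfold E; rewrite Rplus_0_r, Rmult_0_r, sin_0; ring).
  intros h Hh. destruct (Req_dec h 0) as [->|Hh0]; [rewrite E0, !Rabs_R0; lra|].
  specialize (Hdelta h Hh0 Hh).
  rewrite Rplus_0_l, E0, !Rminus_0_r, Rabs_div in Hdelta by exact Hh0.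
  apply Rlt_div_l in Hdelta; [lra|apply Rabs_pos_lt, Hh0].
- intros h. unfold E.
  pose proof (HM (t0 + h)). pose proof (HM t0). pose proof (SIN_bound (w * h)).
  assert (Rabs (l / w * sin (w * h)) <= Rabs l / w).
  { rewrite Rabs_mult, Rabs_div, (Rabs_right w) by lra.
    assert (Rabs (sin (w * h)) <= 1) by (apply Rabs_le; lra).
    assert (0 <= Rabs l / w) by (apply Rdiv_le_0_compat; [apply Rabs_pos|lra]). nra. }
  pose proof (Rabs_triang (F (t0 + h)) (- (F t0 + l / w * sin (w * h)))).
  pose proof (Rabs_triang (F t0) (l / w * sin (w * h))).
  rewrite Rabs_Ropp in *. unfold Rminus. lra.
Qed.

Lemma Rlipschitz_at_expansion F t0 M : Rlipschitz_at F t0 -> (forall t, Rabs (F t) <= M) ->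
  exists A B, 0 <= A /\ 0 <= B /\ forall h, Rabs (F (t0 + h) - F t0) <= A * Rabs h + B * h ^ 2.
Proof.
intros [L [eta [HL [Heta Hlip]]]] HM.
destruct (Rabs_le_lin_quad_of_local (fun h => F (t0 + h) - F t0) L eta (2 * M)) as [B [HB Hexp]];
  [lra|lra| | |exists L, B; auto with real].
- intros h Hh. apply Rabs_lt_between in Hh.
  specialize (Hlip (t0 + h) ltac:(lra)). replace (t0 + h - t0) with h in Hlip by ring. exact Hlip.
- intros h. pose proof (HM (t0 + h)). pose proof (HM t0).
  pose proof (Rabs_triang (F (t0 + h)) (- F t0)). rewrite Rabs_Ropp in *. unfold Rminus. lra.
Qed.

Lemma sum_f_R0_single (c : nat -> R) j n :
  (forall k, k <> j -> c k = 0) -> (j <= n)%nat -> sum_f_R0 c n = c j.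
Proof.
intros H. induction n as [|n IH]; intros Hj; [replace j with O by lia; reflexivity|].
simpl. destruct (Nat.eq_dec j (S n)) as [->|Hne]; [|rewrite IH, (H (S n)) by lia; ring].
rewrite <- (sum_eq (fun _ => 0)); [rewrite sum_cte; ring|]. intros; symmetry; apply H; lia.
Qed.

Section TrigSeries.

Variables (p q b : nat -> R).
Hypothesis Hbpos : forall j, 0 < b j.
Hypothesis Hbinc : forall j, b j < b (S j).

Lemma b_le_of_le k m : (k <= m)%nat -> b k <= b m.
Proof. induction 1 as [|m _ IH]; [lra|specialize (Hbinc m); lra]. Qed.

Lemma Delta_b_pos j : 0 < Delta_b b j.
Proof.
unfold Delta_b. apply Rmin_pos; [destruct j; simpl|]; [specialize (Hbpos O)|specialize (Hbinc j)|
  specialize (Hbinc j)]; lra.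
Qed.

Lemma Delta_b_le j : Delta_b b j <= b j.
Proof.
unfold Delta_b. eapply Rle_trans; [apply Rmin_l|].
destruct j; simpl; [lra|specialize (Hbpos j); lra].
Qed.

Lemma Delta_b_le_dist j k : k <> j -> Delta_b b j <= Rabs (b k - b j).
Proof.
intros Hk. unfold Delta_b. destruct (Nat.lt_total k j) as [Hlt|[Heq|Hgt]]; [|contradiction|].
- eapply Rle_trans; [apply Rmin_l|]. destruct j as [|j]; [lia|]. simpl.
  pose proof (b_le_of_le k j ltac:(lia)). pose proof (Hbinc j).
  rewrite Rabs_left by lra. lra.
- eapply Rle_trans; [apply Rmin_r|].
  pose proof (b_le_of_le (S j) k ltac:(lia)). pose proof (Hbinc j).
  rewrite Rabs_right by lra. lra.
Qed.

Lemma Delta_b_le_dist_sum j k : Delta_b b j <= Rabs (b k + b j).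
Proof.
pose proof (Delta_b_le j). pose proof (Hbpos k). pose proof (Hbpos j).
rewrite Rabs_right by lra. lra.
Qed.

Definition trig_term (k : nat) (t : R) : R := p k * cos (b k * t) + q k * sin (b k * t).
Definition trig_sum (n : nat) (t : R) : R := sum_f_R0 (fun k => trig_term k t) n.
Definition coef_sum (n : nat) : R := sum_f_R0 (fun k => Rabs (p k) + Rabs (q k)) n.

Lemma Rabs_trig_term_le k t : Rabs (trig_term k t) <= Rabs (p k) + Rabs (q k).
Proof.
unfold trig_term. eapply Rle_trans; [apply Rabs_triang|]. rewrite !Rabs_mult.
pose proof (Rabs_pos (p k)). pose proof (Rabs_pos (q k)).
assert (Rabs (cos (b k * t)) <= 1) by (apply Rabs_le, COS_bound).
assert (Rabs (sin (b k * t)) <= 1) by (apply Rabs_le, SIN_bound).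
nra.
Qed.

Lemma coef_sum_growing : Un_growing coef_sum.
Proof.
intros n. unfold coef_sum. simpl.
pose proof (Rabs_pos (p (S n))). pose proof (Rabs_pos (q (S n))). lra.
Qed.

Lemma Rabs_trig_sum_sub_le n k t :
  Rabs (trig_sum (n + k) t - trig_sum n t) <= coef_sum (n + k) - coef_sum n.
Proof.
induction k as [|k IH].
{ rewrite Nat.add_0_r, !Rminus_diag, Rabs_R0. lra. }
rewrite Nat.add_succ_r. unfold trig_sum, coef_sum in *. simpl.
pose proof (Rabs_trig_term_le (S (n + k)) t).
set (s0 := sum_f_R0 (fun k => trig_term k t) n) in *.
set (s1 := sum_f_R0 (fun k => trig_term k t) (n + k)) in *.
pose proof (Rabs_triang (s1 - s0) (trig_term (S (n + k)) t)).
replace (s1 + trig_term (S (n + k)) t - s0) with (s1 - s0 + trig_term (S (n + k)) t) by ring.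
lra.
Qed.

Lemma trig_sum_continuous n x : continuous (trig_sum n) x.
Proof.
induction n as [|n IH]; unfold trig_sum, trig_term in *; simpl; solve_continuous.
Qed.
#[local] Hint Resolve trig_sum_continuous : continuous_R.

Variables (lA : R) (F : R -> R).
Hypothesis HA : Un_cv coef_sum lA.
Hypothesis HF : forall t, Un_cv (fun n => trig_sum n t) (F t).

Lemma Rabs_sub_trig_sum_le n t : Rabs (F t - trig_sum n t) <= lA - coef_sum n.
Proof.
apply (Un_cv_abs_sub_le _ _ _ _ n (HF t)).
intros m Hm. replace m with (n + (m - n))%nat by lia.
eapply Rle_trans; [apply Rabs_trig_sum_sub_le|].
pose proof (growing_ineq _ _ coef_sum_growing HA (n + (m - n))). lra.
Qed.

Lemma coef_sum_tail_cv : Un_cv (fun n => lA - coef_sum n) 0.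
Proof.
intros eps Heps. destruct (HA eps Heps) as [N HN]. exists N. intros n Hn.
specialize (HN n Hn). unfold R_dist in *. rewrite Rminus_0_r, Rabs_minus_sym. exact HN.
Qed.

Lemma Rabs_trig_series_le t : Rabs (F t) <= lA.
Proof.
pose proof (Rabs_sub_trig_sum_le O t). pose proof (Rabs_trig_term_le O t).
unfold trig_sum, coef_sum in *. simpl in *.
pose proof (Rabs_triang (F t - trig_term O t) (trig_term O t)).
replace (F t - trig_term O t + trig_term O t) with (F t) in * by ring. lra.
Qed.

Lemma trig_series_continuous x : continuous F x.
Proof.
apply continuity_pt_filterlim. unfold continuity_pt, continue_in, limit1_in, limit_in.
intros eps Heps. simpl. unfold R_dist.
destruct (coef_sum_tail_cv (eps / 3)) as [N HN]; [lra|].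
specialize (HN N (le_n N)). unfold R_dist in HN. rewrite Rminus_0_r in HN.
pose proof (trig_sum_continuous N x) as C.
apply continuity_pt_filterlim in C. destruct (C (eps / 3)) as [d [Hd Hy]]; [lra|].
exists d. split; [exact Hd|]. intros y [_ Hyx].
pose proof (Rabs_sub_trig_sum_le N y). pose proof (Rabs_sub_trig_sum_le N x).
pose proof (Rle_abs (lA - coef_sum N)).
destruct (Req_dec x y) as [<-|Hne]; [rewrite Rminus_diag, Rabs_R0; lra|].
specialize (Hy y ltac:(split; [split; [constructor|exact Hne]|exact Hyx])).
simpl in Hy. unfold R_dist in Hy.
set (e1 := F y - trig_sum N y) in *. set (e2 := trig_sum N y - trig_sum N x) in *.
set (e3 := F x - trig_sum N x) in *.
replace (F y - F x) with (e1 + e2 + - e3) by (unfold e1, e2, e3; ring).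
pose proof (Rabs_triang (e1 + e2) (- e3)). pose proof (Rabs_triang e1 e2).
rewrite Rabs_Ropp in *. lra.
Qed.

Definition weight (d c ph h : R) : R := sinc4 (d * h) * cos (c * h - ph).

Lemma Rabs_weight_le d c ph h : Rabs (weight d c ph h) <= sinc4 (d * h).
Proof.
unfold weight. rewrite Rabs_mult, (Rabs_right (sinc4 (d * h))) by (apply Rle_ge, sinc4_ge0).
pose proof (sinc4_ge0 (d * h)). assert (Rabs (cos (c * h - ph)) <= 1) by (apply Rabs_le, COS_bound).
nra.
Qed.

Lemma weight_continuous d c ph x : continuous (weight d c ph) x.
Proof. unfold weight. solve_continuous. Qed.
#[local] Hint Resolve weight_continuous : continuous_R.

Definition coef_contrib (t0 : R) (j : nat) (d ph : R) (k : nat) : R :=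
  p k / 2 * (cos (b k * t0 + ph) * sinc4_ft d (b k - b j)
             + cos (b k * t0 - ph) * sinc4_ft d (b k + b j))
  + q k / 2 * (sin (b k * t0 + ph) * sinc4_ft d (b k - b j)
               + sin (b k * t0 - ph) * sinc4_ft d (b k + b j)).

Lemma is_sym_RInt_trig_term_weight t0 j d ph k : d <> 0 ->
  is_sym_RInt (fun h => trig_term k (t0 + h) * weight d (b j) ph h) (coef_contrib t0 j d ph k).
Proof.
intros Hd.
apply (is_sym_RInt_ext (fun h =>
  p k / 2 * (sinc4 (d * h) * cos ((b k - b j) * h + (b k * t0 + ph))
             + sinc4 (d * h) * cos ((b k + b j) * h + (b k * t0 - ph)))
  + q k / 2 * (sinc4 (d * h) * sin ((b k - b j) * h + (b k * t0 + ph))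
               + sinc4 (d * h) * sin ((b k + b j) * h + (b k * t0 - ph))))).
{ intros h. unfold trig_term, weight.
  replace ((b k - b j) * h + (b k * t0 + ph)) with (b k * (t0 + h) - (b j * h - ph)) by ring.
  replace ((b k + b j) * h + (b k * t0 - ph)) with (b k * (t0 + h) + (b j * h - ph)) by ring.
  set (A := b k * (t0 + h)). set (B := b j * h - ph).
  rewrite cos_minus, cos_plus, sin_minus, sin_plus. field. }
eapply is_sym_RInt_eq; [|sym_RInt_linear; sinc4_shift_leaf Hd].
unfold coef_contrib. ring.
Qed.

Lemma is_sym_RInt_trig_sum_weight t0 j d ph n : d <> 0 ->
  is_sym_RInt (fun h => trig_sum n (t0 + h) * weight d (b j) ph h)
              (sum_f_R0 (coef_contrib t0 j d ph) n).
Proof.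
intros Hd. induction n as [|n IH]; [apply is_sym_RInt_trig_term_weight, Hd|].
apply (is_sym_RInt_ext (fun h => trig_sum n (t0 + h) * weight d (b j) ph h
                                 + trig_term (S n) (t0 + h) * weight d (b j) ph h)).
{ intros h. unfold trig_sum. simpl. ring. }
apply is_sym_RInt_plus; [| |exact IH|apply is_sym_RInt_trig_term_weight, Hd];
  intros x; unfold trig_term; solve_continuous.
Qed.

Lemma coef_contrib_eq0 t0 j d ph k : 0 < d -> k <> j -> 4 * d <= Delta_b b j ->
  coef_contrib t0 j d ph k = 0.
Proof.
intros Hd Hk HD. unfold coef_contrib.
pose proof (Delta_b_le_dist j k Hk). pose proof (Delta_b_le_dist_sum j k).
rewrite (sinc4_ft_eq0 d (b k - b j)), (sinc4_ft_eq0 d (b k + b j)) by (auto; lra). ring.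
Qed.

Lemma coef_contrib_diag t0 j d ph : 0 < d -> 4 * d <= Delta_b b j ->
  coef_contrib t0 j d ph j
  = 2 * kappa / d * (p j * cos (b j * t0 + ph) + q j * sin (b j * t0 + ph)).
Proof.
intros Hd HD. unfold coef_contrib. pose proof (Delta_b_le_dist_sum j j).
rewrite (sinc4_ft_eq0 d (b j + b j)) by lra.
rewrite Rminus_diag, sinc4_ft_0 by exact Hd. field. lra.
Qed.

Lemma is_sym_RInt_sine_weight c0 l' w c d ph : 0 < d -> 4 * d <= Rabs c ->
  (l' = 0 \/ (4 * d <= Rabs (w + c) /\ 4 * d <= Rabs (w - c))) ->
  is_sym_RInt (fun h => (c0 + l' * sin (w * h)) * weight d c ph h) 0.
Proof.
intros Hd Hc Hl. assert (Hd0 : d <> 0) by lra.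
apply (is_sym_RInt_ext (fun h =>
  c0 * (sinc4 (d * h) * cos (c * h + - ph))
  + l' / 2 * (sinc4 (d * h) * sin ((w + c) * h + - ph) + sinc4 (d * h) * sin ((w - c) * h + ph)))).
{ intros h. unfold weight.
  replace ((w + c) * h + - ph) with (w * h + (c * h - ph)) by ring.
  replace ((w - c) * h + ph) with (w * h - (c * h - ph)) by ring.
  replace (c * h + - ph) with (c * h - ph) by ring.
  set (B := c * h - ph). rewrite sin_plus, sin_minus. field. }
eapply is_sym_RInt_eq; [|sym_RInt_linear; sinc4_shift_leaf Hd0].
rewrite (sinc4_ft_eq0 d c) by assumption.
destruct Hl as [->|[H1 H2]]; [field|].
rewrite (sinc4_ft_eq0 d (w + c)), (sinc4_ft_eq0 d (w - c)) by assumption. field.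
Qed.

Lemma coef_extraction_partial t0 j d ph l' w A0 B0 n :
  0 < d -> 4 * d <= Delta_b b j ->
  (l' = 0 \/ (4 * d <= Rabs (w + b j) /\ 4 * d <= Rabs (w - b j))) -> 0 <= A0 -> 0 <= B0 ->
  (forall h, Rabs (F (t0 + h) - (F t0 + l' * sin (w * h))) <= A0 * Rabs h + B0 * h ^ 2) ->
  (j <= n)%nat ->
  Rabs (2 * kappa / d * (p j * cos (b j * t0 + ph) + q j * sin (b j * t0 + ph)))
    <= (2 * A0 / d + 4 * B0 / d ^ 2 + 2 * (lA - coef_sum n)) * PI / d.
Proof.
intros Hd HD Hl HA0 HB0 Hexp Hjn. assert (Hd0 : d <> 0) by lra.
set (G := fun h => F t0 + l' * sin (w * h)).
set (g := fun h => trig_sum n (t0 + h) * weight d (b j) ph h - G h * weight d (b j) ph h).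
assert (Hg : forall x, continuous g x) by (intros x; unfold g, G; solve_continuous).
assert (Hlim : is_sym_RInt g
  (2 * kappa / d * (p j * cos (b j * t0 + ph) + q j * sin (b j * t0 + ph)))).
{ eapply is_sym_RInt_eq; [|apply is_sym_RInt_minus;
    [intros; solve_continuous|intros; unfold G; solve_continuous
    |apply is_sym_RInt_trig_sum_weight, Hd0
    |apply is_sym_RInt_sine_weight; [exact Hd|pose proof (Delta_b_le j);
       rewrite Rabs_right by (pose proof (Hbpos j); lra); lra|exact Hl]]].
  rewrite (sum_f_R0_single _ j n); [|intros; apply coef_contrib_eq0; auto|exact Hjn].
  rewrite coef_contrib_diag by assumption. ring. }
pose proof (Rabs_sub_trig_sum_le n t0) as Htail0.
pose proof (Rle_trans _ _ _ (Rabs_pos _) Htail0) as Htail.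
apply (is_sym_RInt_abs_le g _ _ Hlim). intros T HT.
apply Rabs_RInt_le_lorentz; auto.
- intros h. unfold g. rewrite <- Rmult_minus_distr_r.
  apply Rabs_mul_le_lorentz; auto using Rabs_weight_le.
  pose proof (Hexp h). pose proof (Rabs_sub_trig_sum_le n (t0 + h)).
  pose proof (Rabs_triang (F (t0 + h) - G h) (- (F (t0 + h) - trig_sum n (t0 + h)))) as Htri.
  rewrite Rabs_Ropp in Htri. unfold G in *.
  replace (F (t0 + h) - (F t0 + l' * sin (w * h)) + - (F (t0 + h) - trig_sum n (t0 + h)))
    with (trig_sum n (t0 + h) - (F t0 + l' * sin (w * h))) in Htri by ring.
  lra.
- assert (0 <= A0 / d) by (apply Rdiv_le_0_compat; lra).
  assert (0 <= B0 / d ^ 2) by (apply Rdiv_le_0_compat; [lra|apply pow_lt; lra]).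
  unfold Rdiv in *. lra.
Qed.

Lemma coef_extraction t0 j d ph l' w A0 B0 :
  0 < d -> 4 * d <= Delta_b b j ->
  (l' = 0 \/ (4 * d <= Rabs (w + b j) /\ 4 * d <= Rabs (w - b j))) -> 0 <= A0 -> 0 <= B0 ->
  (forall h, Rabs (F (t0 + h) - (F t0 + l' * sin (w * h))) <= A0 * Rabs h + B0 * h ^ 2) ->
  Rabs (p j * cos (b j * t0 + ph) + q j * sin (b j * t0 + ph)) * d
  <= (A0 + 2 * B0 / d) * PI / kappa.
Proof.
intros Hd HD Hl HA0 HB0 Hexp. pose proof kappa_pos as Hk. pose proof PI_RGT_0 as Hpi.
set (X := p j * cos (b j * t0 + ph) + q j * sin (b j * t0 + ph)).
assert (H : Rabs (2 * kappa / d * X) <= (2 * A0 / d + 4 * B0 / d ^ 2) * PI / d).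
{ apply (Rle_of_le_add_vanishing _ _ (2 * PI / d) (fun n => lA - coef_sum n) j);
    [|apply coef_sum_tail_cv].
  intros n Hn. eapply Rle_trans; [apply (coef_extraction_partial t0 j d ph l' w A0 B0 n); auto|].
  right. field. lra. }
rewrite Rabs_mult, (Rabs_right (2 * kappa / d)) in H by (apply Rle_ge, Rdiv_le_0_compat; lra).
apply (Rmult_le_reg_l (2 * kappa / d ^ 2)); [apply Rdiv_lt_0_compat; [lra|apply pow_lt; lra]|].
replace (2 * kappa / d ^ 2 * (Rabs X * d)) with (2 * kappa / d * Rabs X) by (field; lra).
eapply Rle_trans; [exact H|]. right. field. lra.
Qed.

Lemma Delta_amplitude_le t0 j l' A0 B0 :
  (l' = 0 \/ (1 <= j)%nat) -> 0 <= A0 -> 0 <= B0 ->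
  (forall h, Rabs (F (t0 + h) - (F t0 + l' * sin (b O * h))) <= A0 * Rabs h + B0 * h ^ 2) ->
  Delta_b b j * sqrt (p j ^ 2 + q j ^ 2) <= 8 * (A0 + 8 * B0 / Delta_b b j) * PI / kappa.
Proof.
intros Hl HA0 HB0 Hexp. pose proof (Delta_b_pos j) as HD.
assert (Hext : forall ph, Rabs (p j * cos (b j * t0 + ph) + q j * sin (b j * t0 + ph)) * Delta_b b j
                          <= 4 * (A0 + 8 * B0 / Delta_b b j) * PI / kappa).
{ intros ph. pose proof kappa_pos.
  replace (Rabs (p j * cos (b j * t0 + ph) + q j * sin (b j * t0 + ph)) * Delta_b b j)
    with (4 * (Rabs (p j * cos (b j * t0 + ph) + q j * sin (b j * t0 + ph)) * (Delta_b b j / 4)))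
    by field.
  replace (4 * (A0 + 8 * B0 / Delta_b b j) * PI / kappa)
    with (4 * ((A0 + 2 * B0 / (Delta_b b j / 4)) * PI / kappa)) by (field; lra).
  apply Rmult_le_compat_l; [lra|]. apply (coef_extraction t0 j _ ph l' (b O)); auto; try lra.
  destruct Hl as [Hl|Hj]; [left; exact Hl|right].
  replace (4 * (Delta_b b j / 4)) with (Delta_b b j) by field.
  split; [apply Delta_b_le_dist_sum|apply Delta_b_le_dist; lia]. }
assert (Hrot : sqrt (p j ^ 2 + q j ^ 2)
               <= Rabs (p j * cos (b j * t0 + 0) + q j * sin (b j * t0 + 0))
                  + Rabs (p j * cos (b j * t0 + PI / 2) + q j * sin (b j * t0 + PI / 2))).
{ eapply Rle_trans; [|apply sqrt_sum_sqr_le]. right. f_equal.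
  rewrite Rplus_0_r, cos_plus, sin_plus, cos_PI2, sin_PI2.
  pose proof (sin2_cos2 (b j * t0)) as H. unfold Rsqr in H. nra. }
pose proof (Hext 0). pose proof (Hext (PI / 2)). nra.
Qed.

Lemma coef_cv_0 : Un_cv (fun j => Rabs (p j) + Rabs (q j)) 0.
Proof.
assert (Hshift : Un_cv (fun n => coef_sum (S n) - coef_sum n) 0).
{ replace 0 with (lA - lA) by ring. apply CV_minus; [|exact HA].
  intros eps Heps. destruct (HA eps Heps) as [N HN]. exists N. intros n Hn. apply HN. lia. }
intros eps Heps. destruct (Hshift eps Heps) as [N HN]. exists (S N). intros [|n] Hn; [lia|].
replace (Rabs (p (S n)) + Rabs (q (S n))) with (coef_sum (S n) - coef_sum n)
  by (unfold coef_sum; simpl; ring).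
apply HN. lia.
Qed.

Lemma trig_series_not_differentiable t0 l :
  derivable_pt_lim F t0 l -> Un_cv (fun j => Delta_b b j * sqrt (p j ^ 2 + q j ^ 2)) 0.
Proof.
intros Hd eps Heps. pose proof kappa_pos as Hk. pose proof PI_RGT_0 as Hpi.
set (A := eps * kappa / (32 * PI)).
assert (HA0 : 0 < A) by (unfold A; apply Rdiv_lt_0_compat; [apply Rmult_lt_0_compat|]; lra).
destruct (derivable_pt_lim_sin_expansion F t0 l (b O) lA Hd (Hbpos O) Rabs_trig_series_le A HA0)
  as [B [HB Hexp]].
set (D := 256 * B * PI / (kappa * eps) + 1).
assert (HD1 : 1 <= D).
{ unfold D. assert (0 <= 256 * B * PI / (kappa * eps)); [|lra].
  apply Rdiv_le_0_compat; [|apply Rmult_lt_0_compat]; nra. }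
destruct (coef_cv_0 (eps / D)) as [N HN]; [apply Rdiv_lt_0_compat; lra|].
exists (max N 1). intros j Hj. unfold R_dist. rewrite Rminus_0_r.
pose proof (Delta_b_pos j) as HDj. pose proof (sqrt_pos (p j ^ 2 + q j ^ 2)).
rewrite Rabs_right by (apply Rle_ge, Rmult_le_pos; lra).
destruct (Rlt_dec (Delta_b b j) D) as [Hsmall|Hlarge].
- specialize (HN j ltac:(lia)). unfold R_dist in HN. rewrite Rminus_0_r, Rabs_right in HN
    by (pose proof (Rabs_pos (p j)); pose proof (Rabs_pos (q j)); lra).
  apply Rlt_div_r in HN; [|lra]. pose proof (sqrt_sum_sqr_le (p j) (q j)).
  pose proof (Rabs_pos (p j)). pose proof (Rabs_pos (q j)). nra.
- apply Rnot_lt_le in Hlarge.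
  eapply Rle_lt_trans; [apply (Delta_amplitude_le t0 j (l / b O) A B); auto; [right; lia|lra]|].
  assert (B * PI / (Delta_b b j * kappa) <= eps / 256).
  { apply Rle_div_l; [apply Rmult_lt_0_compat; lra|].
    assert (256 * B * PI / (kappa * eps) <= Delta_b b j) as Hle by (unfold D in Hlarge; lra).
    apply Rle_div_l in Hle; [|apply Rmult_lt_0_compat; lra]. nra. }
  replace (8 * (A + 8 * B / Delta_b b j) * PI / kappa)
    with (eps / 4 + 64 * (B * PI / (Delta_b b j * kappa))) by (unfold A; field; lra).
  lra.
Qed.

Lemma trig_series_not_lipschitz t0 : Rlipschitz_at F t0 ->
  exists M, forall j, 1 <= Delta_b b j -> Delta_b b j * sqrt (p j ^ 2 + q j ^ 2) <= M.
Proof.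
intros HL. pose proof kappa_pos. pose proof PI_RGT_0.
destruct (Rlipschitz_at_expansion F t0 lA HL Rabs_trig_series_le) as [A [B [HA0 [HB0 Hexp]]]].
exists (8 * (A + 8 * B) * PI / kappa). intros j Hj.
eapply Rle_trans; [apply (Delta_amplitude_le t0 j 0 A B); auto|].
- intros h. rewrite Rmult_0_l, Rplus_0_r. apply Hexp.
- assert (8 * B / Delta_b b j <= 8 * B) by (apply Rle_div_l; nra).
  apply Rmult_le_compat_r; [left; apply Rinv_0_lt_compat; lra|]. nra.
Qed.

End TrigSeries.

(** * The complex series *)

Lemma Rabs_fst_le_Cmod z : Rabs (fst z) <= Cmod z.
Proof.
unfold Cmod. rewrite <- sqrt_Rsqr_abs. apply sqrt_le_1_alt. unfold Rsqr.
pose proof (pow2_ge_0 (snd z)). nra.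
Qed.

Lemma Rabs_snd_le_Cmod z : Rabs (snd z) <= Cmod z.
Proof.
unfold Cmod. rewrite <- sqrt_Rsqr_abs. apply sqrt_le_1_alt. unfold Rsqr.
pose proof (pow2_ge_0 (fst z)). nra.
Qed.

Lemma Cmod_le_Rabs_add z : Cmod z <= Rabs (fst z) + Rabs (snd z).
Proof. apply sqrt_sum_sqr_le. Qed.

Lemma Cmod_Cscal r z : 0 <= r -> Cmod (Cscal r z) = r * Cmod z.
Proof.
intros Hr. unfold Cmod, Cscal. cbn [fst snd].
replace ((r * fst z) ^ 2 + (r * snd z) ^ 2) with (r ^ 2 * (fst z ^ 2 + snd z ^ 2)) by ring.
rewrite sqrt_mult_alt, sqrt_pow2 by (auto using pow2_ge_0). reflexivity.
Qed.

Lemma Cbounded_of_parts g :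
  Rbounded (fun t => Cre (g t)) -> Rbounded (fun t => Cim (g t)) -> Cbounded g.
Proof.
intros [M1 H1] [M2 H2]. exists (M1 + M2). intros t.
pose proof (Cmod_le_Rabs_add (g t)). pose proof (H1 t). pose proof (H2 t).
cbv beta in *. unfold Cre, Cim in *. lra.
Qed.

Lemma Ccontinuous_at_of_parts g t :
  continuity_pt (fun t => Cre (g t)) t -> continuity_pt (fun t => Cim (g t)) t ->
  Ccontinuous_at g t.
Proof.
intros H1 H2 eps Heps.
destruct (H1 (eps / 2)) as [d1 [Hd1 C1]]; [lra|]. destruct (H2 (eps / 2)) as [d2 [Hd2 C2]]; [lra|].
exists (Rmin d1 d2). split; [apply Rmin_pos; lra|]. intros y Hy.
destruct (Req_dec t y) as [<-|Hne].
{ eapply Rle_lt_trans; [apply Cmod_le_Rabs_add|]. unfold Csub; simpl.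
  rewrite !Rminus_diag, Rabs_R0. lra. }
pose proof (Rmin_l d1 d2). pose proof (Rmin_r d1 d2).
specialize (C1 y ltac:(split; [split; [constructor|exact Hne]|simpl; unfold R_dist; lra])).
specialize (C2 y ltac:(split; [split; [constructor|exact Hne]|simpl; unfold R_dist; lra])).
simpl in C1, C2. unfold R_dist, Cre, Cim in *.
eapply Rle_lt_trans; [apply Cmod_le_Rabs_add|]. simpl. lra.
Qed.

Lemma Cdifferentiable_at_Re g t :
  Cdifferentiable_at g t -> exists l, derivable_pt_lim (fun t => Cre (g t)) t l.
Proof.
intros [l Hl]. exists (fst l). intros eps Heps.
destruct (Hl eps Heps) as [d [Hd Hh]]. exists (mkposreal d Hd). intros h Hh0 Hhd.
eapply Rle_lt_trans; [|exact (Hh h Hh0 Hhd)].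
replace ((Cre (g (t + h)) - Cre (g t)) / h - fst l)
  with (fst (Csub (Cscal (/ h) (Csub (g (t + h)) (g t))) l))
  by (unfold Cre, Csub, Cscal; simpl; field; exact Hh0).
apply Rabs_fst_le_Cmod.
Qed.

Lemma Clipschitz_at_Re g t : Clipschitz_at g t -> Rlipschitz_at (fun t => Cre (g t)) t.
Proof.
intros [L [eta [HL [Heta Hlip]]]]. exists L, eta. repeat split; auto.
intros s Hs. eapply Rle_trans; [|apply Hlip, Hs]. apply (Rabs_fst_le_Cmod (Csub (g s) (g t))).
Qed.

Lemma Csum_fst u n : fst (Csum u n) = sum_f_R0 (fun k => fst (u k)) n.
Proof. induction n as [|n IH]; simpl; [reflexivity|]. rewrite IH. reflexivity. Qed.

Lemma Csum_snd u n : snd (Csum u n) = sum_f_R0 (fun k => snd (u k)) n.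
Proof. induction n as [|n IH]; simpl; [reflexivity|]. rewrite IH. reflexivity. Qed.

Lemma Re_exp_series_cv a b L t :
  Ccv (Csum (fun j => Cmul (a j) (Cexpi (b j * t)))) L ->
  Un_cv (fun n => trig_sum (fun k => Cre (a k)) (fun k => - Cim (a k)) b n t) (Cre L).
Proof.
intros H eps Heps. destruct (H eps Heps) as [N HN]. exists N. intros n Hn.
eapply Rle_lt_trans; [|apply (HN n Hn)]. unfold R_dist.
replace (trig_sum (fun k => Cre (a k)) (fun k => - Cim (a k)) b n t)
  with (fst (Csum (fun j => Cmul (a j) (Cexpi (b j * t))) n)).
- apply (Rabs_fst_le_Cmod (Csub _ L)).
- rewrite Csum_fst. apply sum_eq. intros k _. unfold trig_term, Cre, Cim, Cmul, Cexpi. simpl. ring.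
Qed.

Lemma Im_exp_series_cv a b L t :
  Ccv (Csum (fun j => Cmul (a j) (Cexpi (b j * t)))) L ->
  Un_cv (fun n => trig_sum (fun k => Cim (a k)) (fun k => Cre (a k)) b n t) (Cim L).
Proof.
intros H eps Heps. destruct (H eps Heps) as [N HN]. exists N. intros n Hn.
eapply Rle_lt_trans; [|apply (HN n Hn)]. unfold R_dist.
replace (trig_sum (fun k => Cim (a k)) (fun k => Cre (a k)) b n t)
  with (snd (Csum (fun j => Cmul (a j) (Cexpi (b j * t))) n)).
- apply (Rabs_snd_le_Cmod (Csub _ L)).
- rewrite Csum_snd. apply sum_eq. intros k _. unfold trig_term, Cre, Cim, Cmul, Cexpi. simpl. ring.
Qed.

Section ExpSeries.

Variables (a : nat -> Cx) (p q b : nat -> R) (F : R -> R).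
Hypothesis Ha : Cabs_summable a.
Hypothesis Hbpos : forall j, 0 < b j.
Hypothesis Hbinc : forall j, b j < b (S j).
Hypothesis Hamp : forall k, sqrt (p k ^ 2 + q k ^ 2) = Cmod (a k).
Hypothesis HF : forall t, Un_cv (fun n => trig_sum p q b n t) (F t).

Lemma Cabs_summable_bound :
  exists l, forall j, Cmod (a j) <= l /\ sum_f_R0 (fun k => Cmod (a k)) j <= l.
Proof.
destruct Ha as [l Hl]. exists l. intros j.
assert (Hsum : forall n, sum_f_R0 (fun k => Cmod (a k)) n <= l).
{ apply growing_ineq; auto. intros n. simpl.
  pose proof (sqrt_pos (fst (a (S n)) ^ 2 + snd (a (S n)) ^ 2)). unfold Cmod. lra. }
split; [|apply Hsum]. eapply Rle_trans; [|apply (Hsum j)].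
destruct j as [|j]; simpl; [lra|].
assert (0 <= sum_f_R0 (fun k => Cmod (a k)) j) by (apply cond_pos_sum; intros; apply sqrt_pos). lra.
Qed.

Lemma coef_sum_cv : exists lA, Un_cv (coef_sum p q) lA.
Proof.
destruct Cabs_summable_bound as [l Hl].
destruct (growing_cv (coef_sum p q)) as [lA HlA]; [apply coef_sum_growing| |exists lA; exact HlA].
exists (2 * l). intros x [n ->]. unfold coef_sum.
apply Rle_trans with (sum_f_R0 (fun k => Cmod (a k) * 2) n).
- apply sum_Rle. intros k _. rewrite <- Hamp.
  pose proof (sqrt_plus_sqr (p k) (q k)). pose proof (Rmax_l (Rabs (p k)) (Rabs (q k))).
  pose proof (Rmax_r (Rabs (p k)) (Rabs (q k))). lra.
- rewrite <- scal_sum. destruct (Hl n). lra.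
Qed.

Lemma trig_series_properties :
  ~ Un_cv (fun j => Cmod (Cscal (Delta_b b j) (a j))) 0 ->
  Rbounded F /\ (forall t, continuity_pt F t) /\ (forall t, ~ exists l, derivable_pt_lim F t l)
  /\ ((forall M, exists j, M < Cmod (a j) * Delta_b b j) -> forall t0, ~ Rlipschitz_at F t0).
Proof.
intros Hnot0. destruct coef_sum_cv as [lA HA].
assert (Hseq : forall j, Delta_b b j * sqrt (p j ^ 2 + q j ^ 2) = Cmod (Cscal (Delta_b b j) (a j))).
{ intros j. rewrite Hamp, Cmod_Cscal; [reflexivity|]. left; apply Delta_b_pos; assumption. }
split; [|split; [|split]].
- exists lA. intros t. eapply Rabs_trig_series_le; eauto.
- intros t. apply continuity_pt_filterlim. eapply trig_series_continuous; eauto.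
- intros t [l Hl]. apply Hnot0. apply (Un_cv_ext _ _ Hseq).
  eapply trig_series_not_differentiable; eauto.
- intros HM t0 HL. destruct Cabs_summable_bound as [l Hl].
  destruct (trig_series_not_lipschitz p q b Hbpos Hbinc lA F HA HF t0 HL) as [M HM0].
  destruct (HM (Rmax M 0 + l + 1)) as [j Hj].
  pose proof (Delta_b_pos b Hbpos Hbinc j). pose proof (Rmax_l M 0). pose proof (Rmax_r M 0).
  destruct (Hl j) as [Haj _]. pose proof (sqrt_pos (fst (a j) ^ 2 + snd (a j) ^ 2)) as Hpos.
  fold (Cmod (a j)) in Hpos.
  destruct (Rlt_dec (Delta_b b j) 1) as [Hlt|Hge].
  + assert (Cmod (a j) * Delta_b b j <= Cmod (a j)) by nra. lra.
  + specialize (HM0 j (Rnot_lt_le _ _ Hge)). rewrite Hamp in HM0. lra.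
Qed.

End ExpSeries.

Theorem theorem3p1 (a : nat -> Cx) (b : nat -> R) (f : R -> Cx)
  (Ha : Cabs_summable a)
  (Hbpos : forall j, 0 < b j)
  (Hbinc : forall j, b j < b (S j))
  (Hbinf : cv_infty b)
  (Hnot0 : ~ Un_cv (fun j => Cmod (Cscal (Delta_b b j) (a j))) 0)
  (Hf : forall t, Ccv (Csum (fun j => Cmul (a j) (Cexpi (b j * t)))) (f t)) :
  (Cbounded f /\ (forall t, Ccontinuous_at f t) /\ (forall t, ~ Cdifferentiable_at f t))
  /\ (Rbounded (fun t => Cre (f t)) /\ (forall t, continuity_pt (fun t => Cre (f t)) t)
      /\ (forall t, ~ exists l, derivable_pt_lim (fun t => Cre (f t)) t l))
  /\ (Rbounded (fun t => Cim (f t)) /\ (forall t, continuity_pt (fun t => Cim (f t)) t)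
      /\ (forall t, ~ exists l, derivable_pt_lim (fun t => Cim (f t)) t l))
  /\ ((forall M, exists j, M < Cmod (a j) * Delta_b b j) ->
      forall t0, ~ Clipschitz_at f t0
                 /\ ~ Rlipschitz_at (fun t => Cre (f t)) t0
                 /\ ~ Rlipschitz_at (fun t => Cim (f t)) t0).
Proof.
destruct (trig_series_properties a (fun k => Cre (a k)) (fun k => - Cim (a k)) b
           (fun t => Cre (f t))) as (BRe & CRe & DRe & LRe); auto.
{ intros k. unfold Cmod, Cre, Cim. f_equal. ring. }
{ intros t. apply Re_exp_series_cv, Hf. }
destruct (trig_series_properties a (fun k => Cim (a k)) (fun k => Cre (a k)) b
           (fun t => Cim (f t))) as (BIm & CIm & DIm & LIm); auto.
{ intros k. unfold Cmod, Cre, Cim. f_equal. ring. }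
{ intros t. apply Im_exp_series_cv, Hf. }
split; [|split; [|split]].
- split; [apply Cbounded_of_parts; assumption|split].
  + intros t. apply Ccontinuous_at_of_parts; auto.
  + intros t Hd. apply (DRe t), Cdifferentiable_at_Re, Hd.
- auto.
- auto.
- intros HM t0. split; [|split; [apply LRe, HM|apply LIm, HM]].
  intros HL. apply (LRe HM t0), Clipschitz_at_Re, HL.
Qed.
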